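(* CR linearly simulates resolution: for every finite set of first-order clauses $S$ and every resolution derivation $\psi$ of a clause $c$ from $S$, there is a CR derivation (with all decision literals discharged) $\varphi$ of $c$ from $S$ such that the length (number of inferences) of $\varphi$ is $O(\text{length of }\psi)$ and the size (number of literals) of $\varphi$ is $O(\text{size of }\psi)$.
   Context: Terms, atoms, literals and clauses are first-order; a clause is a disjunction of literals with variables implicitly universally quantified; $\bar{\ell}$ denotes the dual of literal $\ell$; $\bot$ denotes the empty clause, with $\Gamma\vee\bot=\Gamma$. All inference rules operate modulo associativity and commutativity of disjunction, involutivity of negation, and neutrality of $\bot$; distinct clauses are kept variable-disjoint by renaming. A resolution derivation of $c$ from $S$ is a DAG whose leaves are clauses of $S$, whose sink is $c$, and whose internal nodes are obtained by: (Resolution) from $\Gamma\vee\ell$ and $\bar{\ell'}\vee\Delta$ infer $(\Gamma\vee\Delta)\sigma$ where $\sigma$ unifies $\ell,\ell'$; (Factoring) from $\ell_1\vee\ldots\vee\ell_n\vee\ell'_1\vee\ldots\vee\ell'_m$ infer $(\ell\vee\ell'_1\vee\ldots\vee\ell'_m)\sigma$ where $\sigma$ unifies $\ell_1,\ldots,\ell_n$ and $\ell=\ell_k\sigma$ for some $k$. A CR derivation of $c$ from $S$ is a DAG whose nodes are clauses, whose leaves are clauses of $S$ or (unit) decision literals $[\ell]$ (arbitrary literals assumed as hypotheses), whose sink is $c$, and whose internal nodes are obtained by: (Unit-propagating resolution) from unit clauses $\ell_1,\ldots,\ell_n$ and $\bar{\ell'_1}\vee\ldots\vee\bar{\ell'_n}\vee\ell$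 infer $\ell\sigma$, where $\sigma$ unifies $\ell_k,\ell'_k$ for all $k$; (Conflict) from $\ell$ and $\bar{\ell'}$ infer $\bot$, where $\sigma$ unifies $\ell,\ell'$; (Conflict-driven clause learning) from a derivation of $\bot$ using decision literals $[\ell_1],\ldots,[\ell_n]$ infer $(\bar{\ell_1}\sigma^1_1\vee\ldots\vee\bar{\ell_1}\sigma^1_{m_1})\vee\ldots\vee(\bar{\ell_n}\sigma^n_1\vee\ldots\vee\bar{\ell_n}\sigma^n_{m_n})$, discharging them, where $\sigma^k_j$ is the composition of the substitutions used on the $j$-th path from $\ell_k$ to $\bot$. A CR proof is a CR derivation in which all decision literals are discharged. *)

From Stdlib Require Import List Arith Permutation.
Import ListNotations.

Inductive fo_term : Type :=
| Var (x : nat)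
| Fn (f : nat) (args : list fo_term).

Record atom := mkAtom { pred : nat; atom_args : list fo_term }.

(** A literal is a polarity together with an atom; [dual] flips the polarity,
    so involutivity of negation holds definitionally. *)
Record literal := mkLit { pos : bool; atm : atom }.

Definition dual (l : literal) : literal := mkLit (negb (pos l)) (atm l).

(** A clause is a disjunction of literals, represented as a list and always
    compared modulo [Permutation] (associativity/commutativity); the empty
    clause [] is bottom (so neutrality of bottom is automatic). *)
Definition clause := list literal.

Definition substitution := nat -> fo_term.

Fixpoint tsubst (s : substitution) (t : fo_term) : fo_term :=
  match t with
  | Var x => s x
  | Fn f ts => Fn f (map (tsubst s) ts)
  end.

Definition asubst (s : substitution) (a : atom) : atom :=
  mkAtom (pred a) (map (tsubst s) (atom_args a)).
Definition lsubst (s : substitution) (l : literal) : literal :=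
  mkLit (pos l) (asubst s (atm l)).
Definition csubst (s : substitution) (C : clause) : clause := map (lsubst s) C.

Definition unifies (s : substitution) (l l' : literal) : Prop :=
  lsubst s l = lsubst s l'.

Fixpoint occurs (x : nat) (t : fo_term) : bool :=
  match t with
  | Var y => Nat.eqb x y
  | Fn _ ts => existsb (occurs x) ts
  end.
Definition occurs_lit (x : nat) (l : literal) : bool :=
  existsb (occurs x) (atom_args (atm l)).
Definition occurs_clause (x : nat) (C : clause) : bool :=
  existsb (occurs_lit x) C.

Definition variant_of (C D : clause) : Prop :=
  exists rho : nat -> nat, (forall x y, rho x = rho y -> x = y) /\
    Permutation (csubst (fun x => Var (rho x)) C) D.

(** * Resolution derivations
    A derivation (DAG) is a list of nodes; each node is a clause with a
    justification whose premises are indices of earlier nodes. *)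
Inductive res_just : Type :=
| RLeaf
| RRes (i j : nat) (s : substitution)
| RFact (i : nat) (s : substitution).

Definition res_deriv := list (clause * res_just).

Definition rcl (D : res_deriv) (k : nat) : clause := fst (nth k D ([], RLeaf)).
Definition rjst (D : res_deriv) (k : nat) : res_just := snd (nth k D ([], RLeaf)).

Definition res_premises (J : res_just) : list nat :=
  match J with
  | RLeaf => []
  | RRes i j _ => [i; j]
  | RFact i _ => [i]
  end.

Definition res_step_ok (S : list clause) (D : res_deriv) (k : nat) : Prop :=
  let C := rcl D k in
  match rjst D k with
  | RLeaf => exists C0, In C0 S /\ variant_of C0 C
  | RRes i j s =>
      i < k /\ j < k /\
      exists (Gam : clause) (l l' : literal) (Del : clause),
        Permutation (rcl D i) (Gam ++ [l]) /\
        Permutation (rcl D j) (dual l' :: Del) /\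
        unifies s l l' /\
        Permutation C (csubst s (Gam ++ Del))
  | RFact i s =>
      i < k /\
      exists (L L' : clause),
        L <> [] /\
        Permutation (rcl D i) (L ++ L') /\
        (forall a b, In a L -> In b L -> lsubst s a = lsubst s b) /\
        exists l, In l L /\ Permutation C (lsubst s l :: csubst s L')
  end.

Definition is_res_derivation (S : list clause) (c : clause) (D : res_deriv) : Prop :=
  D <> [] /\
  (forall k, k < length D -> res_step_ok S D k) /\
  (forall k1 k2 x, k1 < length D -> k2 < length D -> k1 <> k2 ->
     occurs_clause x (rcl D k1) = true -> occurs_clause x (rcl D k2) = false) /\
  (forall k, k < length D - 1 ->
     exists k', k' < length D /\ In k (res_premises (rjst D k'))) /\
  Permutation (rcl D (length D - 1)) c.

Definition res_length (D : res_deriv) : nat :=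
  length (filter (fun p => match snd p with RLeaf => false | _ => true end) D).
Definition res_size (D : res_deriv) : nat :=
  list_sum (map (fun p => length (fst p)) D).

Inductive cr_just : Type :=
| CLeaf
| CDecide
| CUnitProp (us : list nat) (j : nat) (s : substitution)
| CConflict (i j : nat) (s : substitution)
| CLearn (i : nat).

Definition cr_deriv := list (clause * cr_just).

Definition ccl (D : cr_deriv) (k : nat) : clause := fst (nth k D ([], CLeaf)).
Definition cjst (D : cr_deriv) (k : nat) : cr_just := snd (nth k D ([], CLeaf)).

Definition cr_premises (J : cr_just) : list nat :=
  match J with
  | CLeaf | CDecide => []
  | CUnitProp us j _ => us ++ [j]
  | CConflict i j _ => [i; j]
  | CLearn i => [i]
  end.

(** [open_paths D k] lists, for every path from a decision literal [l] to node
    [k] that does not pass through a clause-learning inference (i.e. along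
    which the decision is not yet discharged), the instance [l sigma] where
    sigma is the composition of the substitutions used on that path.  A node
    used in several premise positions of one inference is a single edge. *)
Fixpoint open_paths_f (fuel : nat) (D : cr_deriv) (k : nat) : list literal :=
  match fuel with
  | 0 => []
  | Datatypes.S f =>
      match cjst D k with
      | CLeaf => []
      | CDecide => ccl D k
      | CUnitProp us j s =>
          map (lsubst s) (flat_map (open_paths_f f D) (nodup Nat.eq_dec (us ++ [j])))
      | CConflict i j s =>
          map (lsubst s) (flat_map (open_paths_f f D) (nodup Nat.eq_dec [i; j]))
      | CLearn _ => []
      end
  end.

Definition open_paths (D : cr_deriv) (k : nat) : list literal :=
  open_paths_f (Datatypes.S k) D k.

Definition cr_step_ok (S : list clause) (D : cr_deriv) (k : nat) : Prop :=
  let C := ccl D k in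
  match cjst D k with
  | CLeaf => exists C0, In C0 S /\ variant_of C0 C
  | CDecide => exists l, C = [l]
  | CUnitProp us j s =>
      Forall (fun u => u < k) us /\ j < k /\
      exists (ls ls' : list literal) (R : clause),
        length R <= 1 /\
        Forall2 (fun u l => ccl D u = [l]) us ls /\
        Permutation (ccl D j) (map dual ls' ++ R) /\
        Forall2 (unifies s) ls ls' /\
        Permutation C (csubst s R)
  | CConflict i j s =>
      i < k /\ j < k /\
      exists l l', ccl D i = [l] /\ ccl D j = [dual l'] /\ unifies s l l' /\ C = []
  | CLearn i =>
      i < k /\ ccl D i = [] /\ variant_of (map dual (open_paths D i)) C
  end.

Definition is_cr_derivation (S : list clause) (c : clause) (D : cr_deriv) : Prop :=
  D <> [] /\
  (forall k, k < length D -> cr_step_ok S D k) /\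
  (forall k1 k2 x, k1 < length D -> k2 < length D -> k1 <> k2 ->
     occurs_clause x (ccl D k1) = true -> occurs_clause x (ccl D k2) = false) /\
  (forall k, k < length D - 1 ->
     exists k', k' < length D /\ In k (cr_premises (cjst D k'))) /\
  Permutation (ccl D (length D - 1)) c.

Definition is_cr_proof (S : list clause) (c : clause) (D : cr_deriv) : Prop :=
  is_cr_derivation S c D /\ open_paths D (length D - 1) = [].

Definition cr_length (D : cr_deriv) : nat :=
  length (filter (fun p => match snd p with CLeaf | CDecide => false | _ => true end) D).
Definition cr_size (D : cr_deriv) : nat :=
  list_sum (map (fun p => length (fst p)) D).

From Stdlib Require Import List Arith Permutation Lia Cantor.
Import ListNotations.

(** Each resolution inference is replayed by a constant number of CR inferences
    ending with the learning of its conclusion.  To resolve [Gam \/ l] with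
    [~l' \/ Del] under [s], decide the duals of fresh copies of the literals of
    [Gam s], unit-propagate [Gam \/ l] to a fresh copy of [l s], decide the
    duals of fresh copies of [Del s] and unit-propagate [~l' \/ Del] to bottom:
    the decisions reach bottom exactly through the instances [~(Gam s)] and
    [~(Del s)], so the learned clause is the resolvent.  Factoring is a single
    propagation in which one decision serves every literal of the factored
    block, and resolving two unit clauses is a conflict.  An inference with
    conclusion [C] thus costs at most three CR inferences and [2|C| + 1]
    literals.  Fresh copies are tagged with the position of the node that
    introduces them, which keeps the nodes of the CR derivation
    variable-disjoint. *)

Fixpoint fo_term_nested_ind (P : fo_term -> Prop) (HV : forall x, P (Var x))
  (HF : forall f ts, Forall P ts -> P (Fn f ts)) (t : fo_term) : P t :=
  match t with
  | Var x => HV x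
  | Fn f ts => HF f ts ((fix go (l : list fo_term) : Forall P l :=
       match l with
       | [] => Forall_nil P
       | u :: l' => Forall_cons u (fo_term_nested_ind P HV HF u) (go l')
       end) ts)
  end.

Lemma le_list_max (l : list nat) (n : nat) : In n l -> n <= list_max l.
Proof.
  intros Hn. apply (proj1 (Forall_forall _ l) (proj1 (list_max_le l _) (le_n _))), Hn.
Qed.

Lemma flat_map_ext_In {A B : Type} (f g : A -> list B) (l : list A) :
  (forall x, In x l -> f x = g x) -> flat_map f l = flat_map g l.
Proof. intros H. rewrite !flat_map_concat_map. f_equal. apply map_ext_in, H. Qed.

Lemma flat_map_nil_In {A B : Type} (f : A -> list B) (l : list A) :
  (forall x, In x l -> f x = []) -> flat_map f l = [].
Proof.
  induction l as [|a l IH]; intros H; simpl; [reflexivity|].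
  rewrite H, IH; simpl; auto. intros x Hx. apply H. simpl; auto.
Qed.

Lemma Forall2_repeat_l {A B : Type} (R : A -> B -> Prop) (x : A) (L : list B) :
  (forall y, In y L -> R x y) -> Forall2 R (repeat x (length L)) L.
Proof.
  induction L as [|y L IH]; intros H; simpl; constructor; [apply H; simpl; auto|].
  apply IH. intros z Hz. apply H. simpl; auto.
Qed.

Lemma NoDup_seq_snoc (b k p : nat) : p < b -> NoDup (seq b k ++ [p]).
Proof.
  intros Hp. apply NoDup_app; [apply seq_NoDup | repeat constructor; easy|].
  intros x Hx [<-|[]]. apply in_seq in Hx. lia.
Qed.

Lemma nodup_Permutation (l l' : list nat) :
  NoDup l' -> (forall x, In x l <-> In x l') -> Permutation (nodup Nat.eq_dec l) l'.
Proof.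
  intros Hl' H. apply NoDup_Permutation; [apply NoDup_nodup | exact Hl'|].
  intros x. rewrite nodup_In. apply H.
Qed.

Fixpoint tvar_max (t : fo_term) : nat :=
  match t with Var x => x | Fn _ ts => list_max (map tvar_max ts) end.
Definition lvar_max (l : literal) : nat := list_max (map tvar_max (atom_args (atm l))).
Definition cvar_max (C : clause) : nat := list_max (map lvar_max C).

Lemma occurs_le_tvar_max (t : fo_term) (x : nat) : occurs x t = true -> x <= tvar_max t.
Proof.
  revert x; induction t as [y|f ts IH] using fo_term_nested_ind; intros x Hx; simpl in *.
  - apply Nat.eqb_eq in Hx. lia.
  - apply existsb_exists in Hx as [u [Hu Hx]].
    eapply Nat.le_trans; [exact (proj1 (Forall_forall _ _) IH u Hu x Hx)|].
    apply le_list_max, in_map, Hu.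
Qed.

Lemma occurs_le_cvar_max (C : clause) (x : nat) : occurs_clause x C = true -> x <= cvar_max C.
Proof.
  intros H. apply existsb_exists in H as [l [Hl H]].
  apply existsb_exists in H as [t [Ht H]].
  eapply Nat.le_trans; [apply occurs_le_tvar_max, H|].
  eapply Nat.le_trans; [apply le_list_max, in_map, Ht|].
  apply le_list_max, (in_map lvar_max), Hl.
Qed.

Lemma tsubst_ext (t : fo_term) (s s' : substitution) :
  (forall x, occurs x t = true -> s x = s' x) -> tsubst s t = tsubst s' t.
Proof.
  revert s s'; induction t as [x|f ts IH] using fo_term_nested_ind; intros s s' Hs; simpl in *.
  - apply Hs, Nat.eqb_refl.
  - f_equal. apply map_ext_in. intros u Hu. rewrite Forall_forall in IH.
    apply IH; [exact Hu|]. intros x Hx. apply Hs, existsb_exists. eauto.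
Qed.

Lemma tsubst_comp (t : fo_term) (s s' : substitution) :
  tsubst s (tsubst s' t) = tsubst (fun x => tsubst s (s' x)) t.
Proof.
  induction t as [x|f ts IH] using fo_term_nested_ind; simpl; [reflexivity|].
  f_equal. rewrite map_map. apply map_ext_in. rewrite Forall_forall in IH. auto.
Qed.

Lemma tsubst_id (t : fo_term) : tsubst Var t = t.
Proof.
  induction t as [x|f ts IH] using fo_term_nested_ind; simpl; [reflexivity|].
  f_equal. rewrite <- (map_id ts) at 2. apply map_ext_in. rewrite Forall_forall in IH. auto.
Qed.

Lemma occurs_tsubst (t : fo_term) (s : substitution) (x : nat) :
  occurs x (tsubst s t) = true -> exists y, occurs y t = true /\ occurs x (s y) = true.
Proof.
  induction t as [y|f ts IH] using fo_term_nested_ind; intros Hx; simpl in *.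
  - exists y. rewrite Nat.eqb_refl. auto.
  - apply existsb_exists in Hx as [u [Hu Hx]]. apply in_map_iff in Hu as [v [<- Hv]].
    destruct (proj1 (Forall_forall _ _) IH v Hv Hx) as [z [Hz1 Hz2]].
    exists z. split; [apply existsb_exists; eauto | exact Hz2].
Qed.

Lemma lsubst_ext (l : literal) (s s' : substitution) :
  (forall x, occurs_lit x l = true -> s x = s' x) -> lsubst s l = lsubst s' l.
Proof.
  intros H. unfold lsubst, asubst. do 2 f_equal.
  apply map_ext_in. intros t Ht. apply tsubst_ext. intros x Hx.
  apply H, existsb_exists. eauto.
Qed.

Lemma lsubst_comp (l : literal) (s s' : substitution) :
  lsubst s (lsubst s' l) = lsubst (fun x => tsubst s (s' x)) l.
Proof.
  unfold lsubst, asubst. simpl. do 2 f_equal.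
  rewrite map_map. apply map_ext. intros. apply tsubst_comp.
Qed.

Lemma lsubst_id (l : literal) : lsubst Var l = l.
Proof.
  destruct l as [p [q args]]. unfold lsubst, asubst. simpl. do 2 f_equal.
  rewrite <- (map_id args) at 2. apply map_ext, tsubst_id.
Qed.

Lemma csubst_id (C : clause) : csubst Var C = C.
Proof. unfold csubst. rewrite <- (map_id C) at 2. apply map_ext, lsubst_id. Qed.

Lemma occurs_lsubst (l : literal) (s : substitution) (x : nat) :
  occurs_lit x (lsubst s l) = true -> exists y, occurs_lit y l = true /\ occurs x (s y) = true.
Proof.
  intros H. apply existsb_exists in H as [u [Hu H]]. simpl in Hu.
  apply in_map_iff in Hu as [v [<- Hv]].
  destruct (occurs_tsubst v s x H) as [y [Hy1 Hy2]].
  exists y. split; [apply existsb_exists; eauto | exact Hy2].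
Qed.

Lemma lsubst_dual (s : substitution) (l : literal) : lsubst s (dual l) = dual (lsubst s l).
Proof. reflexivity. Qed.

Lemma dual_dual (l : literal) : dual (dual l) = l.
Proof. destruct l as [[] a]; reflexivity. Qed.

Lemma map_dual_dual (L : list literal) : map dual (map dual L) = L.
Proof. rewrite map_map. rewrite <- (map_id L) at 2. apply map_ext, dual_dual. Qed.

Lemma variant_of_Permutation (C D : clause) : Permutation C D -> variant_of C D.
Proof. intros H. exists (fun x => x). split; [auto|]. rewrite csubst_id. exact H. Qed.

(** [M] bounds the variables of the resolution derivation; [fresh_var M p x]
    is the copy of [x] tagged with the CR node [p] that introduces it. *)
Definition fresh_var (M p x : nat) : nat := M + to_nat (p, x).
Definition fresh_ren (M p : nat) : substitution := fun x => Var (fresh_var M p x).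
Definition fresh_tag (M y : nat) : nat := fst (of_nat (y - M)).
Definition fresh_origin (M y : nat) : nat := snd (of_nat (y - M)).

Lemma fresh_var_of_nat (M p x : nat) : of_nat (fresh_var M p x - M) = (p, x).
Proof.
  unfold fresh_var. replace (M + to_nat (p, x) - M) with (to_nat (p, x)) by lia.
  apply cancel_of_to.
Qed.

Lemma fresh_tag_var (M p x : nat) : fresh_tag M (fresh_var M p x) = p.
Proof. unfold fresh_tag. rewrite fresh_var_of_nat. reflexivity. Qed.

Lemma fresh_origin_var (M p x : nat) : fresh_origin M (fresh_var M p x) = x.
Proof. unfold fresh_origin. rewrite fresh_var_of_nat. reflexivity. Qed.

Definition vars_below (M : nat) (l : literal) : Prop :=
  forall x, occurs_lit x l = true -> x < M.

Definition tagged_by (M p : nat) (C : clause) : Prop :=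
  forall x, occurs_clause x C = true -> M <= x /\ fresh_tag M x = p.

Definition glue_subst (M : nat) (tau sigma : substitution) : substitution :=
  fun y => if y <? M then tsubst tau (sigma y) else tau (fresh_origin M y).

Lemma glue_subst_fresh (M p : nat) (tau sigma : substitution) (l : literal) :
  lsubst (glue_subst M tau sigma) (lsubst (fresh_ren M p) l) = lsubst tau l.
Proof.
  rewrite lsubst_comp. apply lsubst_ext. intros x _. cbn.
  unfold glue_subst. replace (fresh_var M p x <? M) with false.
  - rewrite fresh_origin_var. reflexivity.
  - symmetry. apply Nat.ltb_ge. unfold fresh_var. lia.
Qed.

Lemma glue_subst_below (M : nat) (tau sigma : substitution) (l : literal) :
  vars_below M l -> lsubst (glue_subst M tau sigma) l = lsubst tau (lsubst sigma l).
Proof.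
  intros H. rewrite lsubst_comp. apply lsubst_ext. intros x Hx. unfold glue_subst.
  apply H, Nat.ltb_lt in Hx. rewrite Hx. reflexivity.
Qed.

Lemma glue_subst_Var_below (M : nat) (sigma : substitution) (l : literal) :
  vars_below M l -> lsubst (glue_subst M Var sigma) l = lsubst sigma l.
Proof. intros H. rewrite glue_subst_below, lsubst_id; auto. Qed.

Lemma tagged_by_fresh (M p : nat) (l : literal) : tagged_by M p [lsubst (fresh_ren M p) l].
Proof.
  intros x Hx. cbn in Hx. rewrite Bool.orb_false_r in Hx.
  apply occurs_lsubst in Hx as [y [_ Hy]]. apply Nat.eqb_eq in Hy. subst x.
  split; [unfold fresh_var; lia | apply fresh_tag_var].
Qed.

(** * Decisions
    To derive the conclusion [G sigma] of an inference, CR decides the duals of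
    fresh copies of the literals [g sigma], [g] in [G], the copy of the [m]-th
    one being tagged with [b + m]. *)
Definition decision_lit (M : nat) (sigma : substitution) (p : nat) (g : literal) : literal :=
  dual (lsubst (fresh_ren M p) (lsubst sigma g)).

Fixpoint decision_lits (M : nat) (sigma : substitution) (b : nat) (G : list literal)
  : list literal :=
  match G with
  | [] => []
  | g :: G' => decision_lit M sigma b g :: decision_lits M sigma (S b) G'
  end.

Definition decision_nodes (M : nat) (sigma : substitution) (b : nat) (G : list literal)
  : cr_deriv :=
  map (fun l => ([l], CDecide)) (decision_lits M sigma b G).

Lemma glue_subst_decision_lit (M p : nat) (tau sigma sigma' : substitution) (g : literal) :
  lsubst (glue_subst M tau sigma') (decision_lit M sigma p g) = dual (lsubst tau (lsubst sigma g)).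
Proof. unfold decision_lit. rewrite lsubst_dual, glue_subst_fresh. reflexivity. Qed.

Lemma glue_subst_Var_decision_lit (M p : nat) (sigma sigma' : substitution) (g : literal) :
  lsubst (glue_subst M Var sigma') (decision_lit M sigma p g) = dual (lsubst sigma g).
Proof. rewrite glue_subst_decision_lit, lsubst_id. reflexivity. Qed.

Lemma decision_lits_length (M : nat) (s : substitution) (b : nat) (G : list literal) :
  length (decision_lits M s b G) = length G.
Proof. revert b; induction G; intros; simpl; auto. Qed.

Lemma decision_nodes_length (M : nat) (s : substitution) (b : nat) (G : list literal) :
  length (decision_nodes M s b G) = length G.
Proof. unfold decision_nodes. rewrite length_map. apply decision_lits_length. Qed.

Lemma map_decision_lits (M : nat) (s : substitution) (b : nat) (G : list literal)
  (F H : literal -> literal) :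
  (forall p g, In g G -> F (decision_lit M s p g) = H g) ->
  map F (decision_lits M s b G) = map H G.
Proof.
  revert b; induction G as [|g G IH]; intros b HF; simpl; [reflexivity|].
  f_equal; [apply HF; simpl; auto|]. apply IH. intros; apply HF; simpl; auto.
Qed.

Lemma decision_lits_Forall2 (M : nat) (s : substitution) (b : nat) (G : list literal)
  (R : literal -> literal -> Prop) :
  (forall p g, In g G -> R (decision_lit M s p g) (dual g)) ->
  Forall2 R (decision_lits M s b G) (map dual G).
Proof.
  revert b; induction G as [|g G IH]; intros b HR; simpl; constructor.
  - apply HR; simpl; auto.
  - apply IH. intros; apply HR; simpl; auto.
Qed.

Lemma tagged_by_decision_lit (M : nat) (s : substitution) (p : nat) (g : literal) :
  tagged_by M p [decision_lit M s p g].
Proof. exact (tagged_by_fresh M p (lsubst s g)). Qed.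

Definition premises_below (D : cr_deriv) : Prop :=
  forall k p, In p (cr_premises (cjst D k)) -> p < k.

Definition is_premise (D : cr_deriv) (p : nat) : Prop :=
  exists k, k < length D /\ In p (cr_premises (cjst D k)).

Definition closed_just (J : cr_just) : Prop :=
  match J with CLeaf | CLearn _ => True | _ => False end.

Lemma cjst_overflow (D : cr_deriv) (k : nat) : length D <= k -> cjst D k = CLeaf.
Proof. intros H. unfold cjst. rewrite nth_overflow; auto. Qed.

Lemma ccl_app_l (D E : cr_deriv) (k : nat) : k < length D -> ccl (D ++ E) k = ccl D k.
Proof. intros H. unfold ccl. rewrite app_nth1; auto. Qed.

Lemma cjst_app_l (D E : cr_deriv) (k : nat) : k < length D -> cjst (D ++ E) k = cjst D k.
Proof. intros H. unfold cjst. rewrite app_nth1; auto. Qed.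

Lemma premises_below_of_steps (Cs : list clause) (D : cr_deriv) :
  (forall k, k < length D -> cr_step_ok Cs D k) -> premises_below D.
Proof.
  intros H k p Hp. destruct (Nat.lt_ge_cases k (length D)) as [Hk|Hk].
  - specialize (H k Hk). unfold cr_step_ok in H.
    destruct (cjst D k); simpl in Hp; try contradiction.
    + destruct H as [H1 [H2 _]]. apply in_app_or in Hp as [Hp|[<-|[]]]; auto.
      exact (proj1 (Forall_forall _ _) H1 p Hp).
    + destruct H as [H1 [H2 _]]. destruct Hp as [<-|[<-|[]]]; auto.
    + destruct H as [H1 _]. destruct Hp as [<-|[]]; auto.
  - rewrite cjst_overflow in Hp by exact Hk. contradiction.
Qed.

Lemma premises_below_app (D E : cr_deriv) :
  premises_below D ->
  (forall k p, length D <= k < length (D ++ E) ->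
     In p (cr_premises (cjst (D ++ E) k)) -> p < k) ->
  premises_below (D ++ E).
Proof.
  intros HD HE k p Hp. destruct (Nat.lt_ge_cases k (length D)) as [Hk|Hk].
  - rewrite cjst_app_l in Hp by exact Hk. exact (HD k p Hp).
  - destruct (Nat.lt_ge_cases k (length (D ++ E))) as [Hk'|Hk'].
    + apply HE; auto.
    + rewrite cjst_overflow in Hp by exact Hk'. contradiction.
Qed.

(** With premises below their conclusion, the fuel [S k] of [open_paths] is
    enough, so it unfolds as a well-founded recursion. *)
Lemma open_paths_f_fuel (D : cr_deriv) (n f f' k : nat) :
  premises_below D -> k < n -> k < f -> k < f' ->
  open_paths_f f D k = open_paths_f f' D k.
Proof.
  intros HD. revert f f' k. induction n as [|n IH]; intros f f' k Hn Hf Hf'; [lia|].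
  destruct f as [|f]; [lia|]. destruct f' as [|f']; [lia|]. cbn [open_paths_f].
  assert (HP := HD k). destruct (cjst D k); auto; f_equal;
    apply flat_map_ext_In; intros p Hp; apply nodup_In, HP in Hp; apply IH; lia.
Qed.

Lemma open_paths_unfold (D : cr_deriv) (k : nat) :
  premises_below D ->
  open_paths D k =
  match cjst D k with
  | CLeaf | CLearn _ => []
  | CDecide => ccl D k
  | CUnitProp us j s =>
      map (lsubst s) (flat_map (open_paths D) (nodup Nat.eq_dec (us ++ [j])))
  | CConflict i j s =>
      map (lsubst s) (flat_map (open_paths D) (nodup Nat.eq_dec [i; j]))
  end.
Proof.
  intros HD. unfold open_paths at 1. cbn [open_paths_f]. assert (HP := HD k).
  destruct (cjst D k); auto; f_equal;
    apply flat_map_ext_In; intros p Hp; apply nodup_In, HP in Hp;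
    apply (open_paths_f_fuel D (S k)); auto; lia.
Qed.

Lemma open_paths_closed (D : cr_deriv) (k : nat) :
  premises_below D -> closed_just (cjst D k) -> open_paths D k = [].
Proof.
  intros HD Hk. rewrite open_paths_unfold by exact HD. destruct (cjst D k); easy.
Qed.

Lemma open_paths_f_app_l (D E : cr_deriv) (f k : nat) :
  premises_below D -> k < length D -> open_paths_f f (D ++ E) k = open_paths_f f D k.
Proof.
  intros HD. revert k. induction f as [|f IH]; intros k Hk; cbn [open_paths_f]; [reflexivity|].
  rewrite cjst_app_l by exact Hk. assert (HP := HD k).
  destruct (cjst D k); auto; [apply ccl_app_l, Hk| |]; f_equal;
    apply flat_map_ext_In; intros p Hp; apply nodup_In, HP in Hp; apply IH; lia.
Qed.

Lemma open_paths_app_l (D E : cr_deriv) (k : nat) :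
  premises_below D -> k < length D -> open_paths (D ++ E) k = open_paths D k.
Proof. apply open_paths_f_app_l. Qed.

Lemma cr_step_ok_app_l (Cs : list clause) (D E : cr_deriv) (k : nat) :
  premises_below D -> k < length D -> cr_step_ok Cs D k -> cr_step_ok Cs (D ++ E) k.
Proof.
  intros HD Hk H. unfold cr_step_ok in *. rewrite cjst_app_l, ccl_app_l by exact Hk.
  destruct (cjst D k); auto.
  - destruct H as [H1 [H2 [ls [ls' [R [H3 [H4 H5]]]]]]].
    split; [exact H1|]. split; [exact H2|]. exists ls, ls', R. split; [exact H3|].
    split; [|rewrite ccl_app_l by lia; exact H5].
    clear H5. induction H4; constructor; inversion H1; subst; auto.
    rewrite ccl_app_l by lia. assumption.
  - destruct H as [H1 [H2 H3]]. split; [exact H1|]. split; [exact H2|].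
    rewrite !ccl_app_l by lia. exact H3.
  - destruct H as [H1 [H2 H3]]. split; [exact H1|]. rewrite ccl_app_l by lia.
    split; [exact H2|]. rewrite open_paths_app_l by (auto; lia). exact H3.
Qed.

Lemma cr_length_app (D E : cr_deriv) : cr_length (D ++ E) = cr_length D + cr_length E.
Proof. unfold cr_length. rewrite filter_app, length_app. reflexivity. Qed.

Lemma cr_size_app (D E : cr_deriv) : cr_size (D ++ E) = cr_size D + cr_size E.
Proof. unfold cr_size. rewrite map_app, list_sum_app. reflexivity. Qed.

Lemma res_length_app (D E : res_deriv) : res_length (D ++ E) = res_length D + res_length E.
Proof. unfold res_length. rewrite filter_app, length_app. reflexivity. Qed.

Lemma res_size_app (D E : res_deriv) : res_size (D ++ E) = res_size D + res_size E.
Proof. unfold res_size. rewrite map_app, list_sum_app. reflexivity. Qed.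

Definition dummy_lit : literal := mkLit true (mkAtom 0 []).

Definition decisions_at (D : cr_deriv) (M : nat) (s : substitution) (b : nat)
  (G : list literal) : Prop :=
  forall m, m < length G ->
    ccl D (b + m) = [decision_lit M s (b + m) (nth m G dummy_lit)] /\
    cjst D (b + m) = CDecide.

Lemma nth_decision_lits (M : nat) (s : substitution) (b m : nat) (G : list literal) :
  m < length G ->
  nth m (decision_lits M s b G) dummy_lit = decision_lit M s (b + m) (nth m G dummy_lit).
Proof.
  revert b m; induction G as [|g G IH]; intros b m Hm; simpl in *; [lia|].
  destruct m as [|m]; [rewrite Nat.add_0_r; reflexivity|].
  rewrite IH by lia. f_equal. lia.
Qed.

Lemma decisions_at_app (M : nat) (s : substitution) (P R : cr_deriv) (G : list literal) :
  decisions_at (P ++ decision_nodes M s (length P) G ++ R) M s (length P) G.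
Proof.
  intros m Hm. unfold ccl, cjst.
  rewrite app_nth2_plus, app_nth1 by (rewrite decision_nodes_length; exact Hm).
  unfold decision_nodes.
  rewrite (nth_indep _ _ ((fun l => ([l], CDecide)) dummy_lit))
    by (rewrite length_map, decision_lits_length; exact Hm).
  rewrite (map_nth (fun l => ([l], CDecide))), nth_decision_lits by exact Hm.
  split; reflexivity.
Qed.

Lemma decisions_at_cons (D : cr_deriv) (M : nat) (s : substitution) (b : nat)
  (g : literal) (G : list literal) :
  decisions_at D M s b (g :: G) -> decisions_at D M s (S b) G.
Proof.
  intros H m Hm. specialize (H (S m) ltac:(simpl; lia)).
  replace (b + S m) with (S b + m) in H by lia. exact H.
Qed.

Lemma decisions_at_units (D : cr_deriv) (M : nat) (s : substitution) (b : nat)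
  (G : list literal) :
  decisions_at D M s b G ->
  Forall2 (fun u l => ccl D u = [l]) (seq b (length G)) (decision_lits M s b G).
Proof.
  revert b; induction G as [|g G IH]; intros b H; simpl; constructor.
  - destruct (H 0 ltac:(simpl; lia)) as [Hc _]. rewrite Nat.add_0_r in Hc. exact Hc.
  - apply IH, (decisions_at_cons _ _ _ _ g), H.
Qed.

Lemma decisions_at_open_paths (D : cr_deriv) (M : nat) (s : substitution) (b : nat)
  (G : list literal) :
  premises_below D -> decisions_at D M s b G ->
  flat_map (open_paths D) (seq b (length G)) = decision_lits M s b G.
Proof.
  intros HD. revert b; induction G as [|g G IH]; intros b H; simpl; [reflexivity|].
  destruct (H 0 ltac:(simpl; lia)) as [Hc Hj]. rewrite Nat.add_0_r in Hc, Hj.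
  rewrite open_paths_unfold, Hj, Hc by exact HD. simpl. f_equal.
  apply IH, (decisions_at_cons _ _ _ _ g), H.
Qed.

Lemma decisions_at_open_paths_major (D : cr_deriv) (M : nat) (s : substitution) (b p : nat)
  (G : list literal) :
  premises_below D -> decisions_at D M s b G -> closed_just (cjst D p) ->
  flat_map (open_paths D) (seq b (length G) ++ [p]) = decision_lits M s b G.
Proof.
  intros HD HG Hp. rewrite flat_map_app, (decisions_at_open_paths D M s) by assumption.
  change (flat_map (open_paths D) [p]) with (open_paths D p ++ []).
  rewrite open_paths_closed by assumption. rewrite !app_nil_r. reflexivity.
Qed.

Lemma decisions_at_step_ok (Cs : list clause) (D : cr_deriv) (M : nat) (s : substitution)
  (b : nat) (G : list literal) (m : nat) :
  decisions_at D M s b G -> m < length G -> cr_step_ok Cs D (b + m).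
Proof.
  intros H Hm. destruct (H m Hm) as [Hc Hj]. unfold cr_step_ok. rewrite Hj, Hc. eauto.
Qed.

Lemma decisions_at_tagged (D : cr_deriv) (M : nat) (s : substitution) (b : nat)
  (G : list literal) (m : nat) :
  decisions_at D M s b G -> m < length G -> tagged_by M (b + m) (ccl D (b + m)).
Proof. intros H Hm. rewrite (proj1 (H m Hm)). apply tagged_by_decision_lit. Qed.

Lemma decision_nodes_cr_length (M : nat) (s : substitution) (b : nat) (G : list literal) :
  cr_length (decision_nodes M s b G) = 0.
Proof. revert b; induction G; intros b; [reflexivity|]. apply IHG. Qed.

Lemma decision_nodes_cr_size (M : nat) (s : substitution) (b : nat) (G : list literal) :
  cr_size (decision_nodes M s b G) = length G.
Proof.
  revert b; induction G as [|g G IH]; intros b; [reflexivity|].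
  exact (f_equal S (IH (S b))).
Qed.

(** * The simulation invariant *)

Definition var_bound (psi : res_deriv) : nat :=
  S (list_max (map (fun p => cvar_max (fst p)) psi)).

Lemma occurs_lt_var_bound (psi : res_deriv) (k x : nat) :
  k < length psi -> occurs_clause x (rcl psi k) = true -> x < var_bound psi.
Proof.
  intros Hk Hx. apply occurs_le_cvar_max in Hx. unfold var_bound.
  enough (cvar_max (rcl psi k) <= list_max (map (fun p => cvar_max (fst p)) psi)) by lia.
  apply le_list_max, (in_map (fun p => cvar_max (fst p))), nth_In, Hk.
Qed.

Lemma vars_below_var_bound (psi : res_deriv) (k : nat) (C : clause) (g : literal) :
  k < length psi -> Permutation (rcl psi k) C -> In g C -> vars_below (var_bound psi) g.
Proof.
  intros Hk HC Hg x Hx. apply (occurs_lt_var_bound psi k); [exact Hk|].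
  apply existsb_exists. exists g. split; [|exact Hx].
  exact (Permutation_in g (Permutation_sym HC) Hg).
Qed.

Definition inference_count (J : res_just) : nat :=
  match J with RLeaf => 0 | _ => 1 end.

Lemma firstn_S_app {A : Type} (l : list A) (n : nat) (d : A) :
  n < length l -> firstn (S n) l = firstn n l ++ [nth n l d].
Proof.
  revert n; induction l as [|a l IH]; intros n Hn; simpl in *; [lia|].
  destruct n as [|n]; [reflexivity|]. simpl. rewrite (IH n) by lia. reflexivity.
Qed.

Lemma res_cost_firstn_S (psi : res_deriv) (n : nat) : n < length psi ->
  res_length (firstn (S n) psi) = res_length (firstn n psi) + inference_count (rjst psi n) /\
  res_size (firstn (S n) psi) = res_size (firstn n psi) + length (rcl psi n).
Proof.
  intros Hn. rewrite (firstn_S_app psi n ([], RLeaf) Hn), res_length_app, res_size_app.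
  unfold rjst, rcl. destruct (nth n psi ([], RLeaf)) as [C []];
    unfold res_length, res_size; simpl; lia.
Qed.

Definition update (pos : nat -> nat) (n q : nat) : nat -> nat :=
  fun k => if k =? n then q else pos k.

Section Simulation.

Variables (Cs : list clause) (psi : res_deriv).
Hypothesis psi_steps : forall k, k < length psi -> res_step_ok Cs psi k.

Let M := var_bound psi.

Lemma res_premises_lt (k i : nat) :
  k < length psi -> In i (res_premises (rjst psi k)) -> i < k.
Proof.
  intros Hk Hi. pose proof (psi_steps k Hk) as Hok. unfold res_step_ok in Hok.
  destruct (rjst psi k); simpl in Hi; [contradiction| |].
  - destruct Hok as [Hi' [Hj _]]. destruct Hi as [<-|[<-|[]]]; assumption.
  - destruct Hok as [Hi' _]. destruct Hi as [<-|[]]; assumption.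
Qed.

(** Auxiliary nodes, those not copying a node of [psi], use only variables
    tagged by their own position, for variable-disjointness, and are premises
    of later nodes, for the uniqueness of the sink. *)
Record simulates (n : nat) (D : cr_deriv) (pos : nat -> nat) : Prop := {
  sim_steps : forall p, p < length D -> cr_step_ok Cs D p;
  sim_pos : forall k, k < n ->
    pos k < length D /\ ccl D (pos k) = rcl psi k /\ closed_just (cjst D (pos k));
  sim_aux : forall p, p < length D ->
    (exists k, k < n /\ p = pos k) \/ (tagged_by M p (ccl D p) /\ is_premise D p);
  sim_premises : forall k i, k < n -> In i (res_premises (rjst psi k)) ->
    is_premise D (pos i);
  sim_last : 0 < n -> pos (n - 1) = length D - 1;
  sim_length : cr_length D <= 3 * res_length (firstn n psi);
  sim_size : cr_size D <= 3 * res_size (firstn n psi) }.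

Lemma simulates_premises_below (n : nat) (D : cr_deriv) (pos : nat -> nat) :
  simulates n D pos -> premises_below D.
Proof. intros H. exact (premises_below_of_steps Cs D (sim_steps _ _ _ H)). Qed.

Lemma is_premise_app_l (D E : cr_deriv) (p : nat) : is_premise D p -> is_premise (D ++ E) p.
Proof.
  intros [k [Hk Hp]]. exists k. rewrite length_app, cjst_app_l by exact Hk.
  split; [lia | exact Hp].
Qed.

Section Extension.

Variables (n : nat) (D B : cr_deriv) (pos : nat -> nat).
Hypotheses (n_lt : n < length psi) (sim : simulates n D pos) (B_nonempty : B <> []).

Let q := length (D ++ B) - 1.

Hypotheses
  (new_steps : forall p, length D <= p < length (D ++ B) -> cr_step_ok Cs (D ++ B) p)
  (last_clause : ccl (D ++ B) q = rcl psi n)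
  (last_closed : closed_just (cjst (D ++ B) q))
  (new_aux : forall p, length D <= p < q ->
     tagged_by M p (ccl (D ++ B) p) /\ is_premise (D ++ B) p)
  (new_premises : forall i, In i (res_premises (rjst psi n)) -> is_premise (D ++ B) (pos i))
  (new_length : cr_length B <= 3 * inference_count (rjst psi n))
  (new_size : cr_size B <= 3 * length (rcl psi n)).

Lemma simulates_extend : simulates (S n) (D ++ B) (update pos n q).
Proof.
  destruct sim as [I_steps I_pos I_aux I_prem _ I_length I_size].
  assert (HD : premises_below D) by exact (premises_below_of_steps Cs D I_steps).
  assert (HB : 0 < length B) by (destruct B; [congruence | simpl; lia]).
  assert (Hq : q = length D + length B - 1) by (unfold q; rewrite length_app; lia).
  assert (Hold : forall k, k < n -> update pos n q k = pos k).
  { intros k Hk. unfold update. replace (k =? n) with false; [reflexivity|].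
    symmetry. apply Nat.eqb_neq. lia. }
  assert (Hnew : update pos n q n = q) by (unfold update; rewrite Nat.eqb_refl; reflexivity).
  destruct (res_cost_firstn_S psi n n_lt) as [Elength Esize].
  constructor.
  - intros p Hp. destruct (Nat.lt_ge_cases p (length D)).
    + apply cr_step_ok_app_l; auto.
    + apply new_steps. lia.
  - intros k Hk. destruct (Nat.eq_dec k n) as [->|Hkn].
    + rewrite Hnew. rewrite length_app. split; [lia|]. split; assumption.
    + rewrite Hold by lia. destruct (I_pos k ltac:(lia)) as [J1 [J2 J3]].
      rewrite length_app, ccl_app_l, cjst_app_l by exact J1. split; [lia|]. split; assumption.
  - intros p Hp. destruct (Nat.lt_ge_cases p (length D)) as [HpD|HpD].
    + destruct (I_aux p HpD) as [[k [Hk ->]]|[Ht Hu]].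
      * left. exists k. split; [lia|]. rewrite Hold; auto.
      * right. rewrite ccl_app_l by exact HpD. split; [exact Ht|]. apply is_premise_app_l, Hu.
    + destruct (Nat.eq_dec p q) as [->|Hpq].
      * left. exists n. split; auto.
      * right. apply new_aux. rewrite length_app in Hp. lia.
  - intros k i Hk Hi. destruct (Nat.eq_dec k n) as [->|Hkn].
    + rewrite Hold by (apply (res_premises_lt n); auto). apply new_premises, Hi.
    + assert (i < k) by (apply (res_premises_lt k); auto; lia).
      rewrite Hold by lia. apply is_premise_app_l, (I_prem k); auto; lia.
  - intros _. rewrite Nat.sub_succ, Nat.sub_0_r, Hnew. reflexivity.
  - rewrite cr_length_app, Elength. lia.
  - rewrite cr_size_app, Esize. lia.
Qed.

End Extension.

Section LearningExtension.

Variables (n : nat) (D B0 : cr_deriv) (J : cr_just) (pos : nat -> nat).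

Let r := length B0 + length D.
Let B := B0 ++ [([], J); (rcl psi n, CLearn r)].

Lemma ccl_bottom : ccl (D ++ B) r = [].
Proof.
  unfold ccl, B, r. rewrite Nat.add_comm, app_assoc, <- length_app, nth_middle.
  reflexivity.
Qed.

Lemma cjst_bottom : cjst (D ++ B) r = J.
Proof.
  unfold cjst, B, r. rewrite Nat.add_comm, app_assoc, <- length_app, nth_middle.
  reflexivity.
Qed.

Lemma nth_learn : nth (S r) (D ++ B) ([], CLeaf) = (rcl psi n, CLearn r).
Proof.
  unfold B, r. replace (B0 ++ [([], J); (rcl psi n, CLearn (length B0 + length D))])
    with ((B0 ++ [([], J)]) ++ [(rcl psi n, CLearn (length B0 + length D))])
    by (rewrite <- app_assoc; reflexivity).
  rewrite app_assoc. replace (S (length B0 + length D)) with (length (D ++ B0 ++ [([], J)]))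
    by (rewrite !length_app; simpl; lia).
  apply nth_middle.
Qed.

Lemma premises_below_learn_block :
  premises_below D ->
  (forall k p, length D <= k < r -> In p (cr_premises (cjst (D ++ B) k)) -> p < k) ->
  Forall (fun p => p < r) (cr_premises J) ->
  premises_below (D ++ B).
Proof.
  intros HD HB0 HJ. apply premises_below_app; [exact HD|]. intros k p Hk Hp.
  assert (HlenB : length (D ++ B) = S (S r)) by (unfold B, r; rewrite !length_app; simpl; lia).
  destruct (Nat.lt_ge_cases k r) as [Hkr|Hkr]; [apply (HB0 k); auto; lia|].
  destruct (Nat.eq_dec k r) as [->|Hkr'].
  - rewrite cjst_bottom in Hp. exact (proj1 (Forall_forall _ _) HJ p Hp).
  - replace k with (S r) in Hp by lia. unfold cjst in Hp. rewrite nth_learn in Hp.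
    destruct Hp as [<-|[]]. lia.
Qed.

Hypotheses (n_lt : n < length psi) (sim : simulates n D pos)
  (block_steps : forall p, length D <= p <= r -> cr_step_ok Cs (D ++ B) p)
  (block_aux : forall p, length D <= p < r ->
     tagged_by M p (ccl (D ++ B) p) /\ is_premise (D ++ B) p)
  (block_premises : forall i, In i (res_premises (rjst psi n)) -> is_premise (D ++ B) (pos i))
  (block_learned : Permutation (map dual (open_paths (D ++ B) r)) (rcl psi n))
  (block_length : cr_length B0 + 2 <= 3 * inference_count (rjst psi n))
  (block_size : cr_size B0 <= 2 * length (rcl psi n)).

Lemma simulates_extend_learn : exists D' pos', simulates (S n) D' pos'.
Proof.
  assert (HlenB : length (D ++ B) = S (S r)) by (unfold B, r; rewrite !length_app; simpl; lia).
  assert (Hq : length (D ++ B) - 1 = S r) by lia.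
  exists (D ++ B), (update pos n (length (D ++ B) - 1)).
  apply simulates_extend; auto; rewrite ?Hq.
  - unfold B. destruct B0; discriminate.
  - intros p Hp. destruct (Nat.le_gt_cases p r) as [Hpr|Hpr]; [apply block_steps; lia|].
    replace p with (S r) by lia. unfold cr_step_ok, ccl, cjst. rewrite nth_learn. cbn.
    split; [lia|]. split; [exact ccl_bottom|].
    apply variant_of_Permutation, block_learned.
  - unfold ccl. rewrite nth_learn. reflexivity.
  - unfold cjst. rewrite nth_learn. exact I.
  - intros p Hp. destruct (Nat.lt_ge_cases p r) as [Hpr|Hpr]; [apply block_aux; lia|].
    replace p with r by lia. rewrite ccl_bottom. split; [intros x Hx; discriminate|].
    exists (S r). split; [lia|]. unfold cjst. rewrite nth_learn. left. reflexivity.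
  - unfold B. rewrite cr_length_app. unfold cr_length at 2. cbn.
    destruct J; cbn; lia.
  - unfold B. rewrite cr_size_app. unfold cr_size at 2. cbn. lia.
Qed.

End LearningExtension.

Section Cases.

Variables (n : nat) (D : cr_deriv) (pos : nat -> nat).
Hypotheses (n_lt : n < length psi) (sim : simulates n D pos).

Lemma simulate_leaf : rjst psi n = RLeaf -> exists D' pos', simulates (S n) D' pos'.
Proof.
  intros Ej. set (B := [(rcl psi n, CLeaf)]).
  assert (Hlast : nth (length D) (D ++ B) ([], CLeaf) = (rcl psi n, CLeaf))
    by apply nth_middle.
  assert (Hq : length (D ++ B) - 1 = length D) by (rewrite length_app; simpl; lia).
  exists (D ++ B), (update pos n (length (D ++ B) - 1)).
  apply simulates_extend; auto; rewrite ?Hq; unfold ccl, cjst; rewrite ?Hlast.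
  - discriminate.
  - intros p Hp. replace p with (length D) by (rewrite length_app in Hp; simpl in Hp; lia).
    unfold cr_step_ok, ccl, cjst. rewrite Hlast. cbn.
    pose proof (psi_steps n n_lt) as Hok. unfold res_step_ok in Hok. rewrite Ej in Hok.
    exact Hok.
  - reflexivity.
  - exact I.
  - lia.
  - rewrite Ej. contradiction.
  - rewrite Ej. reflexivity.
  - unfold cr_size. cbn. lia.
Qed.

Lemma simulate_conflict (i j : nat) (s : substitution) (l l' : literal) :
  rjst psi n = RRes i j s -> i < n -> j < n ->
  Permutation (rcl psi i) [l] -> Permutation (rcl psi j) [dual l'] ->
  unifies s l l' -> rcl psi n = [] ->
  exists D' pos', simulates (S n) D' pos'.
Proof.
  intros Ej Hi Hj HPi HPj Hu Hn.
  destruct (sim_pos _ _ _ sim i Hi) as [Pi1 [Pi2 Pi3]].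
  destruct (sim_pos _ _ _ sim j Hj) as [Pj1 [Pj2 Pj3]].
  assert (HD := simulates_premises_below _ _ _ sim).
  set (J := CConflict (pos i) (pos j) s).
  set (Dn := D ++ [([], J); (rcl psi n, CLearn (length D))]).
  assert (Hbot : cjst Dn (length D) = J) by (unfold cjst, Dn; rewrite nth_middle; reflexivity).
  assert (HDn : premises_below Dn).
  { apply (premises_below_learn_block n D [] J HD); [intros; simpl in *; lia|].
    repeat constructor; assumption. }
  apply (simulates_extend_learn n D [] J pos n_lt sim); cbn [app length Nat.add];
    fold Dn.
  - intros p Hp. replace p with (length D) by lia. unfold cr_step_ok. rewrite Hbot.
    split; [exact Pi1|]. split; [exact Pj1|]. exists l, l'.
    unfold Dn. rewrite (ccl_app_l _ _ (pos i)), (ccl_app_l _ _ (pos j)), Pi2, Pj2 by assumption.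
    split; [apply Permutation_length_1_inv, Permutation_sym, HPi|].
    split; [apply Permutation_length_1_inv, Permutation_sym, HPj|].
    split; [exact Hu|]. unfold ccl. rewrite nth_middle. reflexivity.
  - lia.
  - rewrite Ej. intros i0 Hi0. exists (length D).
    split; [unfold Dn; rewrite length_app; simpl; lia|].
    rewrite Hbot. destruct Hi0 as [<-|[<-|[]]]; simpl; auto.
  - rewrite open_paths_unfold, Hbot by exact HDn. unfold J. cbv beta iota.
    rewrite flat_map_nil_In; [rewrite Hn; constructor|].
    intros x Hx. apply nodup_In in Hx. apply open_paths_closed; [exact HDn|].
    unfold Dn. destruct Hx as [<-|[<-|[]]]; rewrite cjst_app_l; assumption.
  - rewrite Ej. simpl. lia.
  - apply Nat.le_0_l.
Qed.

Section Factoring.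

Variables (i : nat) (s : substitution) (L L' : clause) (l : literal).
Hypotheses (Ej : rjst psi n = RFact i s) (i_lt : i < n) (L_nonempty : L <> [])
  (split_i : Permutation (rcl psi i) (L ++ L'))
  (L_unified : forall a b, In a L -> In b L -> lsubst s a = lsubst s b)
  (l_in_L : In l L)
  (factor_n : Permutation (rcl psi n) (lsubst s l :: csubst s L')).

Let b := length D.
Let G := l :: L'.
Let B0 := decision_nodes M s b G.
(** The decision on the dual of [l s] resolves every literal of the block [L]. *)
Let J := CUnitProp (repeat b (length L) ++ seq (S b) (length L')) (pos i) (glue_subst M Var s).
Let Dn := D ++ B0 ++ [([], J); (rcl psi n, CLearn (length B0 + length D))].
Let r := length B0 + length D.

Lemma factor_r : r = b + S (length L').
Proof. unfold r, B0. rewrite decision_nodes_length. fold b. simpl. lia. Qed.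

Lemma factor_decisions : decisions_at Dn M s b G.
Proof. apply decisions_at_app. Qed.

Lemma factor_below : premises_below Dn.
Proof.
  pose proof (sim_pos _ _ _ sim i i_lt) as [Pi _].
  apply (premises_below_learn_block n D B0 J).
  - exact (simulates_premises_below _ _ _ sim).
  - intros k p Hk. fold Dn. fold r b in Hk. rewrite factor_r in Hk.
    replace k with (b + (k - b)) by lia.
    rewrite (proj2 (factor_decisions (k - b) ltac:(unfold G; simpl; lia))). easy.
  - fold r. rewrite factor_r. simpl. apply Forall_app. split; [apply Forall_app; split|].
    + apply Forall_forall. intros x Hx. apply repeat_spec in Hx. lia.
    + apply Forall_forall. intros x Hx. apply in_seq in Hx. lia.
    + repeat constructor. fold b. lia.
Qed.

Lemma factor_vars_below (g : literal) : In g (L ++ L') -> vars_below M g.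
Proof. apply (vars_below_var_bound psi i); [lia | exact split_i]. Qed.

Lemma factor_bottom_ok : cr_step_ok Cs Dn r.
Proof.
  pose proof (sim_pos _ _ _ sim i i_lt) as [Pi1 [Pi2 _]]. fold b in Pi1.
  assert (Hdec := factor_decisions). assert (Hr := factor_r).
  destruct (Hdec 0 ltac:(simpl; lia)) as [Hb _]. rewrite Nat.add_0_r in Hb.
  unfold cr_step_ok.
  rewrite (cjst_bottom n D B0 J : cjst Dn r = J), (ccl_bottom n D B0 J : ccl Dn r = []).
  unfold J. split; [|split; [lia|]].
  { apply Forall_app. split; apply Forall_forall; intros x Hx;
      [apply repeat_spec in Hx | apply in_seq in Hx]; fold b in Hx; lia. }
  exists (repeat (decision_lit M s b l) (length L) ++ decision_lits M s (S b) L'),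
    (map dual (L ++ L')), [].
  split; [simpl; lia|]. split; [|split; [|split]].
  - apply Forall2_app.
    + rewrite <- (repeat_length (decision_lit M s b l) (length L)) at 1.
      apply Forall2_repeat_l. intros y Hy. apply repeat_spec in Hy. subst y. exact Hb.
    + apply decisions_at_units, (decisions_at_cons _ _ _ _ l), Hdec.
  - unfold Dn. rewrite ccl_app_l, Pi2, map_dual_dual, app_nil_r by exact Pi1. exact split_i.
  - rewrite map_app. apply Forall2_app.
    + rewrite <- (length_map dual L). apply Forall2_repeat_l. intros y Hy.
      apply in_map_iff in Hy as [a [<- Ha]]. unfold unifies.
      rewrite glue_subst_Var_decision_lit, lsubst_dual, glue_subst_Var_below
        by (apply factor_vars_below, in_or_app; auto).
      rewrite (L_unified a l); auto.
    + apply decision_lits_Forall2. intros p g Hg. unfold unifies.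
      rewrite glue_subst_Var_decision_lit, lsubst_dual, glue_subst_Var_below
        by (apply factor_vars_below, in_or_app; auto).
      reflexivity.
  - constructor.
Qed.

Lemma factor_learned : Permutation (map dual (open_paths Dn r)) (rcl psi n).
Proof.
  pose proof (sim_pos _ _ _ sim i i_lt) as [Pi1 [_ Pi3]].
  assert (HDn := factor_below). assert (Hr := factor_r).
  rewrite open_paths_unfold, (cjst_bottom n D B0 J : cjst Dn r = J) by exact HDn. unfold J. cbv beta iota.
  transitivity (map dual (map (lsubst (glue_subst M Var s))
    (flat_map (open_paths Dn) (seq b (length G) ++ [pos i])))).
  { apply Permutation_map, Permutation_map, Permutation_flat_map, nodup_Permutation.
    - apply NoDup_seq_snoc. fold b in Pi1. exact Pi1.
    - intros x. rewrite !in_app_iff, !in_seq. simpl. split.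
      + intros [[Hx|Hx]|Hx]; [apply repeat_spec in Hx; lia | lia | tauto].
      + intros [Hx|Hx]; [|tauto]. destruct (Nat.eq_dec x b) as [->|Hxb]; [|left; right; lia].
        left. left. destruct L; [congruence|]. simpl. auto. }
  rewrite (decisions_at_open_paths_major Dn M s b (pos i) G HDn factor_decisions)
    by (unfold Dn; rewrite cjst_app_l; assumption).
  rewrite map_map, (map_decision_lits _ _ _ _ _ (lsubst s)).
  - apply Permutation_sym, factor_n.
  - intros p g _. rewrite glue_subst_Var_decision_lit. apply dual_dual.
Qed.

Lemma simulate_factor : exists D' pos', simulates (S n) D' pos'.
Proof.
  assert (Hdec := factor_decisions). assert (Hr := factor_r).
  pose proof (sim_pos _ _ _ sim i i_lt) as [Pi1 _].
  assert (Hbot_premise : forall p, In p (repeat b (length L) ++ seq (S b) (length L')) ->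
    is_premise Dn p).
  { intros p Hp. exists r. split; [unfold Dn, r; rewrite !length_app; simpl; lia|].
    rewrite (cjst_bottom n D B0 J : cjst Dn r = J). simpl. apply in_or_app. left. exact Hp. }
  apply (simulates_extend_learn n D B0 J pos n_lt sim); fold Dn r.
  - intros p Hp. destruct (Nat.eq_dec p r) as [->|Hpr]; [apply factor_bottom_ok|].
    fold b in Hp. replace p with (b + (p - b)) by lia.
    apply (decisions_at_step_ok _ _ _ _ _ _ _ Hdec). unfold G. simpl. lia.
  - intros p Hp. fold b in Hp. replace p with (b + (p - b)) by lia.
    split; [apply (decisions_at_tagged _ _ _ _ _ _ Hdec); unfold G; simpl; lia|].
    apply Hbot_premise. apply in_or_app. destruct (p - b) as [|m] eqn:Hm.
    + left. destruct L; [congruence|]. simpl. auto.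
    + right. apply in_seq. lia.
  - rewrite Ej. intros i0 [<-|[]]. exists r.
    split; [unfold Dn, r; rewrite !length_app; simpl; lia|].
    rewrite (cjst_bottom n D B0 J : cjst Dn r = J). simpl. apply in_or_app. right. simpl. auto.
  - apply factor_learned.
  - unfold B0. rewrite decision_nodes_cr_length, Ej. simpl. lia.
  - unfold B0. rewrite decision_nodes_cr_size, (Permutation_length factor_n).
    simpl. unfold csubst. rewrite length_map. lia.
Qed.

End Factoring.

Section Resolution.

Variables (i j : nat) (s : substitution) (Gam Del : clause) (l l' : literal).
Hypotheses (Ej : rjst psi n = RRes i j s) (i_lt : i < n) (j_lt : j < n)
  (split_i : Permutation (rcl psi i) (Gam ++ [l]))
  (split_j : Permutation (rcl psi j) (dual l' :: Del))
  (unif : unifies s l l')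
  (resolvent_n : Permutation (rcl psi n) (csubst s (Gam ++ Del)))
  (resolvent_nonempty : Gam ++ Del <> []).

Let b := length D.
Let a := b + length Gam.
(** The node [a] derives [l s] with its variables renamed apart, tagged by [a]. *)
Let sA := glue_subst M (fresh_ren M a) s.
Let sB := glue_subst M Var s.
Let UA := ([lsubst sA l], CUnitProp (seq b (length Gam)) (pos i) sA).
Let B0 := decision_nodes M s b Gam ++ [UA] ++ decision_nodes M s (S a) Del.
Let J := CUnitProp (seq a (S (length Del))) (pos j) sB.
Let tail := [([], J); (rcl psi n, CLearn (length B0 + length D))].
Let Dn := D ++ B0 ++ tail.
Let r := length B0 + length D.

Lemma resolve_r : r = S a + length Del.
Proof.
  unfold r, B0, a. rewrite length_app, !decision_nodes_length. simpl.
  rewrite decision_nodes_length. fold b. lia.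
Qed.

Lemma resolve_decisions_l : decisions_at Dn M s b Gam.
Proof. unfold Dn, B0. rewrite <- app_assoc. apply decisions_at_app. Qed.

Lemma resolve_decisions_r : decisions_at Dn M s (S a) Del.
Proof.
  assert (Ha : S a = length (D ++ decision_nodes M s b Gam ++ [UA]))
    by (rewrite !length_app, decision_nodes_length; simpl; unfold a, b; lia).
  pose proof (decisions_at_app M s (D ++ decision_nodes M s b Gam ++ [UA]) tail Del) as H.
  rewrite <- Ha, <- !app_assoc in H. unfold Dn, B0. rewrite <- app_assoc. exact H.
Qed.

Lemma resolve_UA : ccl Dn a = [lsubst sA l] /\ cjst Dn a = snd UA.
Proof.
  assert (Ha : a = length (D ++ decision_nodes M s b Gam))
    by (rewrite length_app, decision_nodes_length; reflexivity).
  pose proof (nth_middle (D ++ decision_nodes M s b Gam) (decision_nodes M s (S a) Del ++ tail)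
    UA ([], CLeaf)) as H.
  rewrite <- Ha in H. unfold ccl, cjst, Dn, B0.
  rewrite <- app_assoc, app_assoc. cbn [app]. rewrite H. split; reflexivity.
Qed.

Lemma resolve_below : premises_below Dn.
Proof.
  pose proof (sim_pos _ _ _ sim i i_lt) as [Pi _].
  pose proof (sim_pos _ _ _ sim j j_lt) as [Pj _]. fold b in Pi, Pj.
  assert (Hr := resolve_r).
  apply (premises_below_learn_block n D B0 J).
  - exact (simulates_premises_below _ _ _ sim).
  - intros k p Hk. fold tail Dn. fold r b in Hk. rewrite Hr in Hk.
    destruct (Nat.lt_ge_cases k a) as [Hka|Hka].
    + replace k with (b + (k - b)) by lia.
      rewrite (proj2 (resolve_decisions_l (k - b) ltac:(unfold a in Hka; lia))). easy.
    + destruct (Nat.eq_dec k a) as [->|Hka'].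
      * rewrite (proj2 resolve_UA). simpl. rewrite in_app_iff, in_seq.
        unfold a. intros [Hp|[<-|[]]]; lia.
      * replace k with (S a + (k - S a)) by lia.
        rewrite (proj2 (resolve_decisions_r (k - S a) ltac:(lia))). easy.
  - fold r. rewrite Hr. apply Forall_app. split; [|constructor; [unfold a; lia | constructor]].
    apply Forall_forall. intros x Hx. apply in_seq in Hx. lia.
Qed.

Lemma resolve_vars_below_i (g : literal) : In g (Gam ++ [l]) -> vars_below M g.
Proof. apply (vars_below_var_bound psi i); [lia | exact split_i]. Qed.

Lemma resolve_vars_below_j (g : literal) : In g (dual l' :: Del) -> vars_below M g.
Proof. apply (vars_below_var_bound psi j); [lia | exact split_j]. Qed.

Lemma resolve_sA_l : lsubst sA l = lsubst (fresh_ren M a) (lsubst s l).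
Proof. apply glue_subst_below, resolve_vars_below_i, in_or_app. simpl; auto. Qed.

Lemma resolve_UA_ok : cr_step_ok Cs Dn a.
Proof.
  pose proof (sim_pos _ _ _ sim i i_lt) as [Pi1 [Pi2 _]]. fold b in Pi1.
  destruct resolve_UA as [Hc Hj]. unfold cr_step_ok. rewrite Hj, Hc. simpl snd.
  split; [apply Forall_forall; intros x Hx; apply in_seq in Hx; unfold a; lia|].
  split; [unfold a; lia|].
  exists (decision_lits M s b Gam), (map dual Gam), [l].
  split; [simpl; lia|]. split; [|split; [|split]].
  - apply decisions_at_units, resolve_decisions_l.
  - unfold Dn. rewrite ccl_app_l, Pi2, map_dual_dual by exact Pi1. exact split_i.
  - apply decision_lits_Forall2. intros p g Hg. unfold unifies, sA.
    rewrite glue_subst_decision_lit, lsubst_dual, glue_subst_below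
      by (apply resolve_vars_below_i, in_or_app; auto).
    reflexivity.
  - reflexivity.
Qed.

Lemma resolve_UA_open_paths :
  open_paths Dn a = map (lsubst sA) (decision_lits M s b Gam).
Proof.
  pose proof (sim_pos _ _ _ sim i i_lt) as [Pi1 [_ Pi3]]. fold b in Pi1.
  rewrite open_paths_unfold, (proj2 resolve_UA) by exact resolve_below. simpl snd.
  cbv beta iota. rewrite nodup_fixed_point by (apply NoDup_seq_snoc; exact Pi1).
  rewrite (decisions_at_open_paths_major Dn M s b (pos i) Gam resolve_below resolve_decisions_l)
    by (unfold Dn; rewrite cjst_app_l; assumption).
  reflexivity.
Qed.

Lemma resolve_bottom_ok : cr_step_ok Cs Dn r.
Proof.
  pose proof (sim_pos _ _ _ sim j j_lt) as [Pj1 [Pj2 _]]. fold b in Pj1.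
  assert (Hr := resolve_r).
  unfold cr_step_ok.
  rewrite (cjst_bottom n D B0 J : cjst Dn r = J), (ccl_bottom n D B0 J : ccl Dn r = []).
  unfold J. split; [apply Forall_forall; intros x Hx; apply in_seq in Hx; lia|].
  split; [unfold a in Hr; lia|].
  exists (lsubst sA l :: decision_lits M s (S a) Del), (l' :: map dual Del), [].
  split; [simpl; lia|]. split; [|split; [|split]].
  - constructor; [exact (proj1 resolve_UA)|].
    apply decisions_at_units, resolve_decisions_r.
  - unfold Dn. rewrite ccl_app_l, Pj2 by exact Pj1. cbn [map].
    rewrite map_dual_dual, app_nil_r. exact split_j.
  - constructor.
    + unfold unifies, sB. rewrite resolve_sA_l, glue_subst_fresh, lsubst_id.
      rewrite glue_subst_Var_below by exact (resolve_vars_below_j (dual l') (or_introl eq_refl)).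
      exact unif.
    + apply decision_lits_Forall2. intros p g Hg. unfold unifies, sB.
      rewrite glue_subst_Var_decision_lit, lsubst_dual, glue_subst_Var_below
        by (apply resolve_vars_below_j; simpl; auto).
      reflexivity.
  - constructor.
Qed.

Lemma resolve_learned : Permutation (map dual (open_paths Dn r)) (rcl psi n).
Proof.
  pose proof (sim_pos _ _ _ sim j j_lt) as [Pj1 [_ Pj3]]. fold b in Pj1.
  assert (HDn := resolve_below).
  rewrite open_paths_unfold, (cjst_bottom n D B0 J : cjst Dn r = J) by exact HDn.
  unfold J. cbv beta iota.
  rewrite nodup_fixed_point by (apply NoDup_seq_snoc; unfold a; lia).
  cbn [seq app flat_map]. rewrite resolve_UA_open_paths.
  rewrite (decisions_at_open_paths_major Dn M s (S a) (pos j) Del HDn resolve_decisions_r)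
    by (unfold Dn; rewrite cjst_app_l; assumption).
  rewrite !map_app, !map_map, (map_decision_lits _ _ _ _ _ (lsubst s)),
    (map_decision_lits _ _ _ _ _ (lsubst s)).
  - rewrite <- map_app. apply Permutation_sym, resolvent_n.
  - intros p g _. unfold sB. rewrite glue_subst_Var_decision_lit. apply dual_dual.
  - intros p g _. unfold sA, sB.
    rewrite glue_subst_decision_lit, lsubst_dual, glue_subst_fresh, lsubst_id.
    apply dual_dual.
Qed.

Lemma resolve_UA_premise (p : nat) :
  In p (seq b (length Gam) ++ [pos i]) -> is_premise Dn p.
Proof.
  intros Hp. exists a. rewrite (proj2 resolve_UA). split; [|exact Hp].
  assert (Hr := resolve_r). unfold Dn, r, tail in *. rewrite !length_app. simpl. lia.
Qed.

Lemma resolve_bottom_premise (p : nat) :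
  In p (seq a (S (length Del)) ++ [pos j]) -> is_premise Dn p.
Proof.
  intros Hp. exists r. rewrite (cjst_bottom n D B0 J : cjst Dn r = J). split; [|exact Hp].
  unfold Dn, r, tail. rewrite !length_app. simpl. lia.
Qed.

Lemma resolve_block_steps (p : nat) : length D <= p <= r -> cr_step_ok Cs Dn p.
Proof.
  intros Hp. fold b in Hp. assert (Hr := resolve_r).
  destruct (Nat.lt_ge_cases p a) as [Hpa|Hpa].
  - replace p with (b + (p - b)) by lia.
    apply (decisions_at_step_ok _ _ _ _ _ _ _ resolve_decisions_l). unfold a in Hpa. lia.
  - destruct (Nat.eq_dec p a) as [->|Hpa']; [apply resolve_UA_ok|].
    destruct (Nat.eq_dec p r) as [->|Hpr]; [apply resolve_bottom_ok|].
    replace p with (S a + (p - S a)) by lia.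
    apply (decisions_at_step_ok _ _ _ _ _ _ _ resolve_decisions_r). lia.
Qed.

Lemma resolve_block_aux (p : nat) :
  length D <= p < r -> tagged_by M p (ccl Dn p) /\ is_premise Dn p.
Proof.
  intros Hp. fold b in Hp. assert (Hr := resolve_r).
  destruct (Nat.lt_ge_cases p a) as [Hpa|Hpa].
  - unfold a in Hpa. replace p with (b + (p - b)) by lia. split.
    + apply (decisions_at_tagged _ _ _ _ _ _ resolve_decisions_l). lia.
    + apply resolve_UA_premise, in_or_app. left. apply in_seq. lia.
  - destruct (Nat.eq_dec p a) as [->|Hpa'].
    + rewrite (proj1 resolve_UA), resolve_sA_l. split; [apply tagged_by_fresh|].
      apply resolve_bottom_premise. simpl. auto.
    + replace p with (S a + (p - S a)) by lia. split.
      * apply (decisions_at_tagged _ _ _ _ _ _ resolve_decisions_r). lia.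
      * apply resolve_bottom_premise, in_or_app. left. apply in_seq. lia.
Qed.

Lemma simulate_resolve : exists D' pos', simulates (S n) D' pos'.
Proof.
  apply (simulates_extend_learn n D B0 J pos n_lt sim); fold tail Dn r.
  - exact resolve_block_steps.
  - exact resolve_block_aux.
  - rewrite Ej. intros i0 [<-|[<-|[]]].
    + apply resolve_UA_premise, in_or_app. right. simpl. auto.
    + apply resolve_bottom_premise, in_or_app. right. simpl. auto.
  - exact resolve_learned.
  - unfold B0. rewrite !cr_length_app, !decision_nodes_cr_length, Ej. simpl. lia.
  - unfold B0. rewrite !cr_size_app, !decision_nodes_cr_size, (Permutation_length resolvent_n).
    unfold csubst. rewrite length_map, length_app. unfold cr_size. simpl.
    destruct Gam, Del; [contradiction | simpl; lia ..].
Qed.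

End Resolution.

Lemma simulate_step : exists D' pos', simulates (S n) D' pos'.
Proof.
  pose proof (psi_steps n n_lt) as Hok. unfold res_step_ok in Hok.
  destruct (rjst psi n) as [|i j s|i s] eqn:Ej.
  - apply simulate_leaf, Ej.
  - destruct Hok as [Hi [Hj [Gam [l [l' [Del [HPi [HPj [Hu HPn]]]]]]]]].
    destruct Gam as [|g Gam]; [destruct Del as [|e Del]|].
    + apply (simulate_conflict i j s l l'); auto.
      apply Permutation_nil, Permutation_sym, HPn.
    + apply (simulate_resolve i j s [] (e :: Del) l l'); auto. discriminate.
    + apply (simulate_resolve i j s (g :: Gam) Del l l'); auto. discriminate.
  - destruct Hok as [Hi [L [L' [HL [HPi [Hunif [l [Hl HPn]]]]]]]].
    apply (simulate_factor i s L L' l); auto.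
Qed.

End Cases.

Lemma simulates_prefix (n : nat) : n <= length psi -> exists D pos, simulates n D pos.
Proof.
  induction n as [|n IH]; intros Hn.
  - exists [], (fun _ => 0). constructor; simpl; intros; try lia; reflexivity.
  - destruct (IH ltac:(lia)) as [D [pos Hsim]]. apply (simulate_step n D pos); auto.
Qed.

End Simulation.

Lemma simulation_variable_disjoint (Cs : list clause) (psi : res_deriv) (D : cr_deriv)
  (pos : nat -> nat) :
  (forall k1 k2 x, k1 < length psi -> k2 < length psi -> k1 <> k2 ->
     occurs_clause x (rcl psi k1) = true -> occurs_clause x (rcl psi k2) = false) ->
  simulates Cs psi (length psi) D pos ->
  forall p1 p2 x, p1 < length D -> p2 < length D -> p1 <> p2 ->
    occurs_clause x (ccl D p1) = true -> occurs_clause x (ccl D p2) = false.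
Proof.
  intros Hdis Hsim p1 p2 x Hp1 Hp2 Hne Hx1.
  destruct (occurs_clause x (ccl D p2)) eqn:Hx2; [exfalso|reflexivity].
  destruct (sim_aux _ _ _ _ _ Hsim p1 Hp1) as [[k1 [Hk1 ->]]|[T1 _]];
  destruct (sim_aux _ _ _ _ _ Hsim p2 Hp2) as [[k2 [Hk2 ->]]|[T2 _]].
  - destruct (sim_pos _ _ _ _ _ Hsim k1 Hk1) as [_ [E1 _]].
    destruct (sim_pos _ _ _ _ _ Hsim k2 Hk2) as [_ [E2 _]].
    rewrite E1 in Hx1. rewrite E2 in Hx2.
    assert (Hk12 : k1 <> k2) by (intros ->; contradiction).
    rewrite (Hdis k1 k2 x Hk1 Hk2 Hk12 Hx1) in Hx2. discriminate.
  - destruct (sim_pos _ _ _ _ _ Hsim k1 Hk1) as [_ [E1 _]]. rewrite E1 in Hx1.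
    apply occurs_lt_var_bound in Hx1; [|exact Hk1]. apply T2 in Hx2. lia.
  - destruct (sim_pos _ _ _ _ _ Hsim k2 Hk2) as [_ [E2 _]]. rewrite E2 in Hx2.
    apply occurs_lt_var_bound in Hx2; [|exact Hk2]. apply T1 in Hx1. lia.
  - apply T1 in Hx1 as [_ E1]. apply T2 in Hx2 as [_ E2]. congruence.
Qed.

Lemma simulation_cr_proof (Cs : list clause) (c : clause) (psi : res_deriv) (D : cr_deriv)
  (pos : nat -> nat) :
  is_res_derivation Cs c psi -> simulates Cs psi (length psi) D pos ->
  is_cr_proof Cs c D.
Proof.
  intros [Hne [_ [Hdis [Hsink Hc]]]] Hsim.
  assert (Hlen : 0 < length psi) by (destruct psi; [congruence | simpl; lia]).
  destruct (sim_pos _ _ _ _ _ Hsim (length psi - 1) ltac:(lia)) as [J1 [J2 J3]].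
  rewrite (sim_last _ _ _ _ _ Hsim Hlen) in J1, J2, J3.
  split; [split; [|split; [|split; [|split]]]|].
  - destruct D; [simpl in J1; lia | discriminate].
  - exact (sim_steps _ _ _ _ _ Hsim).
  - exact (simulation_variable_disjoint Cs psi D pos Hdis Hsim).
  - intros p Hp. destruct (sim_aux _ _ _ _ _ Hsim p ltac:(lia)) as [[k [Hk ->]]|[_ H]];
      [|exact H].
    destruct (Nat.eq_dec k (length psi - 1)) as [->|Hk'];
      [rewrite (sim_last _ _ _ _ _ Hsim Hlen) in Hp; lia|].
    destruct (Hsink k ltac:(lia)) as [k' [Hk'' Hin]].
    exact (sim_premises _ _ _ _ _ Hsim k' k Hk'' Hin).
  - rewrite J2. exact Hc.
  - exact (open_paths_closed _ _ (simulates_premises_below _ _ _ _ _ Hsim) J3).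
Qed.

Theorem theorem1 :
  exists K : nat,
    forall (S : list clause) (c : clause) (psi : res_deriv),
      is_res_derivation S c psi ->
      exists phi : cr_deriv,
        is_cr_proof S c phi /\
        cr_length phi <= K * res_length psi /\
        cr_size phi <= K * res_size psi.
Proof.
  exists 3. intros S c psi Hpsi.
  destruct (simulates_prefix S psi (proj1 (proj2 Hpsi)) (length psi) (le_n _))
    as [phi [pos Hsim]].
  exists phi. split; [exact (simulation_cr_proof S c psi phi pos Hpsi Hsim)|].
  pose proof (sim_length _ _ _ _ _ Hsim) as Hlength.
  pose proof (sim_size _ _ _ _ _ Hsim) as Hsize.
  rewrite firstn_all in Hlength, Hsize. split; assumption.
Qed.
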